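(* For any $\alpha>0$, integers $n>0$, $m>2$ with $m>n$, and $k$ with $n\le k\le m$, there exists a full rank matrix $X\in\mathbb{R}^{n\times m}$ such that for every subset $\mathcal S\subseteq[m]$ of cardinality $k$ with $\mathrm{rank}(X_{\mathcal S})=n$, $$\|X_{\mathcal S}^{\dagger}\|_2^2\ge\Big(\frac{m+\alpha^2}{k+\alpha^2}-1\Big)\|X^{\dagger}\|_2^2 .$$
   Context: $[m]=\{1,\dots,m\}$; $X_{\mathcal S}$ is the submatrix of columns of $X$ indexed by $\mathcal S$; $A^\dagger$ is the Moore–Penrose pseudo-inverse; $\|\cdot\|_2$ is the spectral norm. *)

From HB Require Import structures.
From mathcomp Require Import all_boot all_order all_algebra.
From mathcomp Require Import boolp classical_sets reals.
Set Implicit Arguments. Unset Strict Implicit. Unset Printing Implicit Defensive.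
Import Order.TTheory GRing.Theory Num.Theory.
Local Open Scope ring_scope.
Local Open Scope classical_set_scope.

Definition vnorm {R : realType} {p : nat} (v : 'cV[R]_p) : R :=
  Num.sqrt (\sum_(i < p) v i 0 ^+ 2).

Definition spnorm {R : realType} {p q : nat} (A : 'M[R]_(p, q)) : R :=
  sup [set vnorm (A *m v) | v in [set v : 'cV[R]_q | vnorm v <= 1]].

Definition penrose {R : realType} {p q : nat} (A : 'M[R]_(p, q)) (B : 'M[R]_(q, p)) : Prop :=
  [/\ A *m B *m A = A, B *m A *m B = B, (A *m B)^T = A *m B & (B *m A)^T = B *m A].

(* The Moore-Penrose pseudo-inverse (it exists and is unique; chosen via xget). *)
Definition pinv {R : realType} {p q : nat} (A : 'M[R]_(p, q)) : 'M[R]_(q, p) :=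
  xget 0 [set B | penrose A B].

(* X_S : the submatrix of X formed by the columns indexed by S (in increasing order). *)
Definition subcols {R : realType} {p q : nat} (X : 'M[R]_(p, q)) (S : {set 'I_q})
  : 'M[R]_(p, #|S|) :=
  colsub (@enum_val _ (mem S)) X.

From HB Require Import structures.
From mathcomp Require Import all_boot all_order all_algebra.
From mathcomp Require Import boolp classical_sets reals.
From mathcomp Require Import ring lra zify.
Set Implicit Arguments. Unset Strict Implicit. Unset Printing Implicit Defensive.
Import Order.TTheory GRing.Theory Num.Theory.
Local Open Scope ring_scope.

(* The witness is a co-isometry X (X X^T = 1, hence X^+ = X^T has norm 1) whose rows
   2..n are coordinate vectors and whose first row spreads its unit norm evenly, with
   entries 1/sqrt d, over the d = m - n + 1 columns the other rows do not touch.
   If X_S has full row rank, y = X_S^+ e_1 solves X_S y = e_1, so pairing with the first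
   row of X_S gives 1 <= sqrt (k/d) |y|, i.e. |X_S^+|^2 >= d/k; and since d + k > m,
   d/k dominates (m + alpha^2)/(k + alpha^2) - 1. *)

Section SpectralNorm.
Variable R : realType.
Implicit Types p q : nat.

Lemma vnorm_ge0 p (v : 'cV[R]_p) : 0 <= vnorm v.
Proof. exact: sqrtr_ge0. Qed.

Lemma vnorm_sqr p (v : 'cV[R]_p) : vnorm v ^+ 2 = \sum_i v i 0 ^+ 2.
Proof. by rewrite sqr_sqrtr // sumr_ge0 // => i _; rewrite sqr_ge0. Qed.

Lemma vnormE p (v : 'cV[R]_p) : vnorm v = Num.sqrt ((v^T *m v) 0 0).
Proof. by rewrite /vnorm mxE; congr Num.sqrt; apply: eq_bigr => i _; rewrite mxE expr2. Qed.

Lemma vnorm0 p : vnorm (0 : 'cV[R]_p) = 0.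
Proof. by rewrite /vnorm big1 ?sqrtr0 // => i _; rewrite mxE expr0n. Qed.

Lemma vnorm_delta p (i : 'I_p) : vnorm (delta_mx i 0 : 'cV[R]_p) = 1.
Proof.
rewrite /vnorm (bigD1 i) //= big1 => [|j /negbTE ji]; last by rewrite mxE ji expr0n.
by rewrite mxE !eqxx expr1n addr0 sqrtr1.
Qed.

Lemma abs_entry_le1 p (v : 'cV[R]_p) j : vnorm v <= 1 -> `|v j 0| <= 1.
Proof.
move=> v_le1; have vj_le1 : v j 0 ^+ 2 <= 1.
  have : vnorm v ^+ 2 <= 1 by have := vnorm_ge0 v; nra.
  rewrite vnorm_sqr (bigD1 j) //=; apply: le_trans; rewrite lerDl.
  by apply: sumr_ge0 => i _; rewrite sqr_ge0.
by rewrite -real_normK ?num_real // in vj_le1; have := normr_ge0 (v j 0); nra.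
Qed.

Lemma spnorm_image_bounded p q (M : 'M[R]_(p, q)) :
  exists C, forall v, vnorm v <= 1 -> vnorm (M *m v) <= C.
Proof.
exists (Num.sqrt (\sum_i (\sum_j `|M i j|) ^+ 2)) => v v_le1.
rewrite ler_sqrt ?sumr_ge0 // => [|i _]; last by rewrite sqr_ge0.
apply: ler_sum => i _; rewrite mxE -[_ ^+ 2]real_normK ?num_real //.
rewrite ler_pXn2r ?nnegrE ?sumr_ge0 //; apply: le_trans (ler_norm_sum _ _ _) _.
apply: ler_sum => j _; rewrite normrM -{2}[`|M i j|]mulr1.
by rewrite ler_wpM2l ?abs_entry_le1.
Qed.

Lemma spnorm_ub p q (M : 'M[R]_(p, q)) v : vnorm v <= 1 -> vnorm (M *m v) <= spnorm M.
Proof.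
move=> v_le1; have [C MC] := spnorm_image_bounded M.
apply: sup_upper_bound; last by exists v.
split; first by exists (vnorm (M *m v)), v.
by exists C => _ [w w_le1 <-]; exact: MC.
Qed.

Lemma spnorm_le p q (M : 'M[R]_(p, q)) C :
  (forall v, vnorm v <= 1 -> vnorm (M *m v) <= C) -> spnorm M <= C.
Proof.
move=> MC; apply: ge_sup => [|_ [v v_le1 <-]]; last exact: MC.
by exists (vnorm (M *m 0)), 0; rewrite //= vnorm0 ler01.
Qed.

Lemma spnorm_ge0 p q (M : 'M[R]_(p, q)) : 0 <= spnorm M.
Proof.
have zero_le1 : vnorm (0 : 'cV[R]_q) <= 1 by rewrite vnorm0 ler01.
exact: le_trans (vnorm_ge0 _) (spnorm_ub M zero_le1).
Qed.

Lemma vnorm_coisometry_tr p q (A : 'M[R]_(p, q)) v :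
  A *m A^T = 1%:M -> vnorm (A^T *m v) = vnorm v.
Proof. by move=> AAt; rewrite !vnormE trmx_mul trmxK mulmxA -(mulmxA v^T) AAt mulmx1. Qed.

Lemma spnorm_coisometry_tr p q (A : 'M[R]_(p, q)) : A *m A^T = 1%:M -> spnorm A^T <= 1.
Proof. by move=> AAt; apply: spnorm_le => v; rewrite vnorm_coisometry_tr. Qed.

End SpectralNorm.

Section PseudoInverse.
Variable R : realType.
Implicit Types p q : nat.

Lemma mulmx_tr_eq0 q (w : 'rV[R]_q) : w *m w^T = 0 -> w = 0.
Proof.
move=> /matrixP/(_ 0 0); rewrite !mxE => /eqP.
rewrite psumr_eq0 => [/allP sum0|j _]; last by rewrite mxE -expr2 sqr_ge0.
apply/matrixP => i j; rewrite (ord1 i) mxE.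
by have := sum0 j (mem_index_enum _); rewrite mxE -expr2 sqrf_eq0 => /eqP.
Qed.

Lemma mulmx_tr_unit p q (A : 'M[R]_(p, q)) : row_free A -> A *m A^T \in unitmx.
Proof.
move=> freeA; rewrite -row_free_unit; apply: inj_row_free => v vAAt0.
apply: (row_free_inj freeA); rewrite mul0mx; apply: mulmx_tr_eq0.
by rewrite trmx_mul mulmxA -(mulmxA v) vAAt0 mul0mx.
Qed.

Lemma penrose_row_free p q (A : 'M[R]_(p, q)) :
  row_free A -> penrose A (A^T *m invmx (A *m A^T)).
Proof.
move=> freeA; have unitAAt := mulmx_tr_unit freeA.
have AB : A *m (A^T *m invmx (A *m A^T)) = 1%:M by rewrite mulmxA mulmxV.
split; first by rewrite AB mul1mx.
- by rewrite -mulmxA AB mulmx1.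
- by rewrite AB trmx1.
by rewrite !trmx_mul trmxK trmx_inv trmx_mul trmxK mulmxA.
Qed.

Lemma pinv_penrose p q (A : 'M[R]_(p, q)) : row_free A -> penrose A (pinv A).
Proof.
by move=> freeA; apply: xgetPex; exists (A^T *m invmx (A *m A^T)); apply: penrose_row_free.
Qed.

Lemma mulmx_pinv p q (A : 'M[R]_(p, q)) : row_free A -> A *m pinv A = 1%:M.
Proof.
move=> freeA; have [ABA _ _ _] := pinv_penrose freeA.
by apply: (row_free_inj freeA); rewrite ABA mul1mx.
Qed.

Lemma pinv_coisometry p q (A : 'M[R]_(p, q)) : A *m A^T = 1%:M -> pinv A = A^T.
Proof.
move=> AAt; have freeA : row_free A by apply/row_freeP; exists A^T.
have AB := mulmx_pinv freeA; have [_ BAB _ BA_sym] := pinv_penrose freeA.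
set B := pinv A in AB BAB BA_sym *.
have BE : B = A^T *m (B^T *m B) by rewrite -{1}BAB -BA_sym trmx_mul mulmxA.
have BtB : B^T *m B = 1%:M by rewrite -AB [in RHS]BE mulmxA AAt mul1mx.
by rewrite BE BtB mulmx1.
Qed.

(* Cauchy-Schwarz in disguise: sum the AM-GM bounds [2 s a_j y_j <= y_j^2 + s^2 c^2]
   taken at [s = (q c^2)^-1]. *)
Lemma sum_sqr_ge_of_dot1 q (a y : 'I_q -> R) (c : R) :
  (forall j, `|a j| <= c) -> \sum_j a j * y j = 1 -> (q%:R * c ^+ 2)^-1 <= \sum_j y j ^+ 2.
Proof.
move=> a_le_c dot1; set s := (q%:R * c ^+ 2)^-1.
have [->|s_neq0] := eqVneq s 0; first by apply: sumr_ge0 => j _; rewrite sqr_ge0.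
have qcs : q%:R * c ^+ 2 * s = 1 by rewrite mulfV // -invr_eq0.
have : \sum_j 2 * s * (a j * y j) <= \sum_j (y j ^+ 2 + s ^+ 2 * c ^+ 2).
  apply: ler_sum => j _; have aj_le_c : a j ^+ 2 <= c ^+ 2.
    rewrite -real_normK ?num_real // ler_pXn2r ?nnegrE ?(le_trans _ (a_le_c j)) //.
  by have := sqr_ge0 (y j - s * a j); have := sqr_ge0 s; nra.
rewrite -mulr_sumr dot1 mulr1 big_split sumr_const card_ord /= -[_ *+ q]mulr_natr.
suff -> : s ^+ 2 * c ^+ 2 * q%:R = s by lra.
by transitivity (s * (q%:R * c ^+ 2 * s)); [ring | rewrite qcs mulr1].
Qed.

Lemma spnorm_pinv_ge p q (A : 'M[R]_(p, q)) (i : 'I_p) (c : R) :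
  row_free A -> (forall j, `|A i j| <= c) -> (q%:R * c ^+ 2)^-1 <= spnorm (pinv A) ^+ 2.
Proof.
move=> freeA Ai_le_c; pose y : 'cV[R]_q := pinv A *m delta_mx i 0.
have Ay : A *m y = delta_mx i 0 by rewrite mulmxA mulmx_pinv // mul1mx.
have dot1 : \sum_j A i j * y j 0 = 1.
  by have /matrixP/(_ i 0) := Ay; rewrite !mxE !eqxx.
apply: le_trans (sum_sqr_ge_of_dot1 Ai_le_c dot1) _; rewrite -vnorm_sqr.
have y_le : vnorm y <= spnorm (pinv A) by apply: spnorm_ub; rewrite vnorm_delta.
by rewrite ler_pXn2r ?nnegrE ?vnorm_ge0 ?spnorm_ge0.
Qed.

End PseudoInverse.

Lemma shifted_ratio_le (F : realFieldType) (a k m d t : F) :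
  0 <= a -> 0 < k -> m <= d + k -> 0 <= d -> 0 <= t <= 1 ->
  ((m + a) / (k + a) - 1) * t ^+ 2 <= d / k.
Proof.
move=> a_ge0 k_gt0 m_le d_ge0 /andP[t_ge0 t_le1].
have dk_ge0 : 0 <= d / k by rewrite divr_ge0 // ltW.
have ratio_le : (m + a) / (k + a) - 1 <= d / k.
  rewrite lerBlDl ler_pdivrMr; last by lra.
  have dkk : d / k * k = d by rewrite divfK // lt0r_neq0.
  by nra.
have t2_le1 : t ^+ 2 <= 1 by nra.
by case: (lerP 0 ((m + a) / (k + a) - 1)) => ?; nra.
Qed.

Section SpreadMatrix.
Variables (R : realType) (n m : nat).

Definition spread_mx : 'M[R]_(n, m) :=
  \matrix_(r < n, j < m)
    if (r == 0 :> nat)%N then (if (j < (m - n).+1)%N then (Num.sqrt ((m - n).+1)%:R)^-1 else 0)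
    else (if (j == r + (m - n) :> nat)%N then 1 else 0).

Hypothesis n_le_m : (n <= m)%N.

Lemma spread_mx_coisometry : spread_mx *m spread_mx^T = 1%:M.
Proof.
set d := (m - n).+1; set c : R := (Num.sqrt d%:R)^-1.
have row0_orth (r : 'I_n) (j : 'I_m) : r != 0 :> nat ->
    (if (j < d)%N then c else 0) * (if (j == r + (m - n) :> nat)%N then 1 else 0) = 0.
  move=> r_neq0; case: ifP => [j_lt|]; last by rewrite mul0r.
  by case: eqP => [j_eq|]; [move: j_lt; rewrite j_eq /d; lia | rewrite mulr0].
apply/matrixP => r r'; rewrite !mxE; under eq_bigr => j _ do rewrite !mxE -/d -/c.
have [r0|r_neq0] := eqVneq (r : nat) 0%N; have [r'0|r'_neq0] := eqVneq (r' : nat) 0%N.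
- rewrite -val_eqE /= r0 r'0 eqxx.
  rewrite (eq_bigr (fun j : 'I_m => if (j < d)%N then c * c else 0)) => [|j _]; last first.
    by case: ifP; rewrite ?mulr0.
  rewrite -big_mkcond /= -(big_ord_widen m (fun _ => c * c)); last first.
    by have := ltn_ord r; rewrite /d; lia.
  rewrite sumr_const card_ord -expr2 exprVn sqr_sqrtr ?ler0n // -[_ *+ d]mulr_natr.
  by rewrite mulVf // pnatr_eq0.
- rewrite big1 => [|j _]; last exact: row0_orth.
  by rewrite -val_eqE /= r0 eq_sym (negbTE r'_neq0).
- rewrite big1 => [|j _]; last by rewrite mulrC row0_orth.
  by rewrite -val_eqE /= r'0 (negbTE r_neq0).
- have j0_lt : (r + (m - n) < m)%N by have := ltn_ord r; lia.
  rewrite (bigD1 (Ordinal j0_lt)) //= big1 => [|j j_neq].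
    by rewrite eqxx mul1r addr0 eqn_add2r val_eqE; case: (r == r').
  by rewrite -val_eqE /= in j_neq; rewrite (negbTE j_neq) mul0r.
Qed.

Lemma rank_spread_mx : \rank spread_mx = n.
Proof. by apply/eqP/row_freeP; exists spread_mx^T; exact: spread_mx_coisometry. Qed.

Lemma spnorm_pinv_subcols_spread_mx (S : {set 'I_m}) :
  (0 < n)%N -> \rank (subcols spread_mx S) = n ->
  ((m - n).+1)%:R / #|S|%:R <= spnorm (pinv (subcols spread_mx S)) ^+ 2.
Proof.
move=> n_gt0 rankXS.
have freeXS : row_free (subcols spread_mx S) by rewrite /row_free rankXS.
set c : R := (Num.sqrt ((m - n).+1)%:R)^-1.
have c_ge0 : 0 <= c by rewrite invr_ge0 sqrtr_ge0.
have row0_le_c (j : 'I_#|S|) : `|subcols spread_mx S (Ordinal n_gt0) j| <= c.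
  by rewrite !mxE /=; case: ifP => _; rewrite ?normr0 ?ger0_norm.
have -> : ((m - n).+1)%:R / #|S|%:R = (#|S|%:R * c ^+ 2)^-1.
  by rewrite exprVn sqr_sqrtr ?ler0n // invf_div.
exact: spnorm_pinv_ge freeXS row0_le_c.
Qed.

End SpreadMatrix.

Theorem theorem4p3 (R : realType) (alpha : R) (n m k : nat) :
  0 < alpha -> (0 < n)%N -> (2 < m)%N -> (n < m)%N -> (n <= k)%N -> (k <= m)%N ->
  exists X : 'M[R]_(n, m),
    \rank X = n /\
    forall S : {set 'I_m}, #|S| = k -> \rank (subcols X S) = n ->
      spnorm (pinv (subcols X S)) ^+ 2 >=
        ((m%:R + alpha ^+ 2) / (k%:R + alpha ^+ 2) - 1) * spnorm (pinv X) ^+ 2.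
Proof.
move=> _ n_gt0 _ /ltnW n_le_m n_le_k k_le_m.
exists (spread_mx R n m); split; first exact: rank_spread_mx.
move=> S cardS rankXS; have XXt := spread_mx_coisometry R n_le_m.
rewrite (pinv_coisometry XXt) -cardS.
apply: le_trans _ (spnorm_pinv_subcols_spread_mx n_gt0 rankXS).
apply: shifted_ratio_le; rewrite ?sqr_ge0 ?ler0n ?spnorm_ge0 ?spnorm_coisometry_tr //.
- by rewrite ltr0n cardS; lia.
- by rewrite -natrD ler_nat cardS; lia.
Qed.
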